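(* Let $\mathbb{A}$ be a medial algebra over a field $\mathbb{K}$ of characteristic not $2,3$, and let $c$ be a nonzero idempotent of $\mathbb{A}$. Then: (a) $L_c(xy)=L_c(x)L_c(y)$ for all $x,y\in\mathbb{A}$, i.e. $L_c$ is an algebra endomorphism; (b) $\mathbb{A}_c(0)=\ker L_c$ is an ideal of $\mathbb{A}$; (c) $L_c(\mathbb{A})$ is a subalgebra of $\mathbb{A}$; (d) $\mathbb{A}_c(1)=\{x: cx=x\}$ is a subalgebra of $L_c(\mathbb{A})$ and $\dim\mathbb{A}_c(1)\ge 1$; (e) for any nonzero idempotents $c_1,c_2$ of $\mathbb{A}$, $L_{c_2}L_{c_1}=L_{c_2c_1}L_{c_2}$.
   Context: All algebras are commutative, possibly nonassociative, finite-dimensional. Medial: $(xy)(zw)=(xz)(yw)$ for all $x,y,z,w\in\mathbb{A}$. $L_y:x\mapsto yx$. $\mathbb{A}_c(\lambda)$ denotes the $\lambda$-eigenspace of $L_c$. *)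

From HB Require Import structures.
From mathcomp Require Import all_boot all_order all_algebra.
Set Implicit Arguments. Unset Strict Implicit. Unset Printing Implicit Defensive.
Import GRing.Theory.
Local Open Scope ring_scope.

(* A commutative, possibly nonassociative, finite-dimensional algebra over a
   field K is modelled as a finite-dimensional K-vector space V (vectType)
   together with a bilinear product  mul : {bilinear V -> V -> V}. *)

Definition commutative_mul (K : fieldType) (V : vectType K)
  (mul : V -> V -> V) := forall x y, mul x y = mul y x.

Definition medial (K : fieldType) (V : vectType K) (mul : V -> V -> V) :=
  forall x y z w, mul (mul x y) (mul z w) = mul (mul x z) (mul y w).

Definition Lmul (K : fieldType) (V : vectType K)
  (mul : {bilinear V -> V -> V}) (y : V) : 'End(V) := linfun (mul y).

Definition eigsp (K : fieldType) (V : vectType K)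
  (mul : {bilinear V -> V -> V}) (c : V) (lam : K) : {vspace V} :=
  lker (Lmul mul c - lam *: \1%VF).

(* an ideal: a subspace U with A U contained in U (commutativity makes
   left and right ideals coincide) *)
Definition is_ideal (K : fieldType) (V : vectType K) (mul : V -> V -> V)
  (U : {vspace V}) := forall a x, x \in U -> mul a x \in U.

Definition is_subalgebra (K : fieldType) (V : vectType K) (mul : V -> V -> V)
  (U : {vspace V}) := forall x y, x \in U -> y \in U -> mul x y \in U.

Definition nonzero_idempotent (K : fieldType) (V : vectType K)
  (mul : V -> V -> V) (c : V) := c != 0 /\ mul c c = c.

From HB Require Import structures.
From mathcomp Require Import all_boot all_order all_algebra.
Import GRing.Theory.
Local Open Scope ring_scope.

(* For an idempotent e, mediality gives e(xy) = (ee)(xy) = (ex)(ey), i.e. L_e is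
   multiplicative; all five parts are direct consequences of this identity. *)

Section MedialIdempotent.

Variables (K : fieldType) (V : vectType K) (mul : {bilinear V -> V -> V}).
Hypothesis hmed : medial mul.

Lemma LmulE (y x : V) : Lmul mul y x = mul y x.
Proof. by rewrite /Lmul lfunE. Qed.

Lemma eigsp0E (c : V) : eigsp mul c 0 = lker (Lmul mul c).
Proof. by rewrite /eigsp scale0r subr0. Qed.

Lemma mem_eigsp1 (c x : V) : (x \in eigsp mul c 1) = (mul c x == x).
Proof.
rewrite /eigsp memv_ker add_lfunE opp_lfunE scale_lfunE id_lfunE.
by rewrite scale1r LmulE subr_eq0.
Qed.

Lemma eigsp1_sub_limg (c : V) : (eigsp mul c 1 <= limg (Lmul mul c))%VS.
Proof.
apply/subvP => x; rewrite mem_eigsp1 => /eqP cx.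
by rewrite -cx -LmulE memv_img ?memvf.
Qed.

Variables (e : V) (he : mul e e = e).

Lemma idem_mul_morph (x y : V) : mul e (mul x y) = mul (mul e x) (mul e y).
Proof. by rewrite -{1}he hmed. Qed.

Lemma Lmul_idem_morph (x y : V) :
  Lmul mul e (mul x y) = mul (Lmul mul e x) (Lmul mul e y).
Proof. by rewrite !LmulE idem_mul_morph. Qed.

Lemma Lmul_idem_comp (y : V) :
  (Lmul mul e \o Lmul mul y)%VF = (Lmul mul (mul e y) \o Lmul mul e)%VF.
Proof. by apply/lfunP => x; rewrite !comp_lfunE !LmulE idem_mul_morph. Qed.

Lemma lker_Lmul_idem_ideal : is_ideal mul (lker (Lmul mul e)).
Proof.
move=> a x; rewrite !memv_ker !LmulE => /eqP ex0.
by rewrite idem_mul_morph ex0 linear0r.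
Qed.

Lemma limg_Lmul_idem_subalgebra : is_subalgebra mul (limg (Lmul mul e)).
Proof.
move=> _ _ /memv_imgP [u _ ->] /memv_imgP [v _ ->].
by rewrite -Lmul_idem_morph memv_img ?memvf.
Qed.

Lemma eigsp1_idem_subalgebra : is_subalgebra mul (eigsp mul e 1).
Proof.
move=> x y; rewrite !mem_eigsp1 => /eqP ex /eqP ey.
by rewrite idem_mul_morph ex ey.
Qed.

Lemma dim_eigsp1_idem_gt0 : e != 0 -> (1 <= \dim (eigsp mul e 1))%N.
Proof.
move=> e0; have : (<[e]> <= eigsp mul e 1)%VS by rewrite -memvE mem_eigsp1 he.
by move/dimvS; rewrite dim_vline e0.
Qed.

End MedialIdempotent.

Theorem proposition3p5 (K : fieldType) (V : vectType K)
  (mul : {bilinear V -> V -> V})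
  (hcomm : commutative_mul mul) (hmed : medial mul)
  (hchar2 : (2%:R : K) != 0) (hchar3 : (3%:R : K) != 0)
  (c : V) (hc : nonzero_idempotent mul c) :
  (* (a) L_c is an algebra endomorphism *)
  (forall x y, Lmul mul c (mul x y) = mul (Lmul mul c x) (Lmul mul c y))
  (* (b) A_c(0) = ker L_c is an ideal *)
  /\ (eigsp mul c 0 = lker (Lmul mul c) /\ is_ideal mul (eigsp mul c 0))
  (* (c) L_c(A) is a subalgebra *)
  /\ is_subalgebra mul (limg (Lmul mul c))
  (* (d) A_c(1) is a subalgebra of L_c(A), of dimension >= 1 *)
  /\ ((eigsp mul c 1 <= limg (Lmul mul c))%VS
      /\ is_subalgebra mul (eigsp mul c 1)
      /\ (1 <= \dim (eigsp mul c 1))%N)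
  (* (e) L_{c2} L_{c1} = L_{c2 c1} L_{c2} for nonzero idempotents c1, c2 *)
  /\ (forall c1 c2 : V, nonzero_idempotent mul c1 -> nonzero_idempotent mul c2 ->
        (Lmul mul c2 \o Lmul mul c1)%VF = (Lmul mul (mul c2 c1) \o Lmul mul c2)%VF).
Proof.
case: hc => c0 cc.
split; first exact: Lmul_idem_morph.
split; first by rewrite eigsp0E; split=> //; exact: lker_Lmul_idem_ideal.
split; first exact: limg_Lmul_idem_subalgebra.
split.
  split; first exact: eigsp1_sub_limg.
  by split; [exact: eigsp1_idem_subalgebra | exact: dim_eigsp1_idem_gt0].
by move=> c1 c2 _ [_ c2c2]; exact: Lmul_idem_comp.
Qed.
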